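(* Let $K$ be a field and let $M,N\in M_n(K)$ be two simultaneously diagonalizable matrices. Let $t$ be drawn from the uniform distribution on a finite set $S\subset K$. Then with probability at least $1-\frac{n(n-1)}{2|S|}$, every invertible matrix $T$ such that $T^{-1}(M+tN)T$ is diagonal also satisfies that $T^{-1}MT$ and $T^{-1}NT$ are diagonal. *)

From mathcomp Require Import all_boot all_order all_algebra.
From mathcomp Require Import boolp.
Set Implicit Arguments. Unset Strict Implicit. Unset Printing Implicit Defensive.
Import GRing.Theory Num.Theory.
Local Open Scope ring_scope.

Definition simult_diagonalizable (K : fieldType) (n : nat) (M N : 'M[K]_n) : Prop :=
  exists P : 'M[K]_n, P \in unitmx /\
    is_diag_mx (invmx P *m M *m P) /\ is_diag_mx (invmx P *m N *m P).

Definition good_param (K : fieldType) (n : nat) (M N : 'M[K]_n) (t : K) : Prop :=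
  forall T : 'M[K]_n, T \in unitmx ->
    is_diag_mx (invmx T *m (M + t *: N) *m T) ->
    is_diag_mx (invmx T *m M *m T) /\ is_diag_mx (invmx T *m N *m T).

(* Probability of the good event when t is uniform on the finite set S
   (given as a duplicate-free nonempty list). *)
Definition prob_good (K : fieldType) (n : nat) (M N : 'M[K]_n) (S : seq K) : rat :=
  (count (fun t => `[< good_param M N t >]) S)%:R / (size S)%:R.

From mathcomp Require Import all_boot all_order all_algebra.
From mathcomp Require Import boolp.
Set Implicit Arguments. Unset Strict Implicit. Unset Printing Implicit Defensive.
Import GRing.Theory Num.Theory.
Local Open Scope ring_scope.

(* Conjugating by a common diagonalizer, M = diag a and N = diag b.  If T
   diagonalizes diag (a + t b), every column of T lies in an eigenspace of
   diag (a + t b), so T^-1 X T is diagonal for every diagonal X that is constant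
   on the level sets of a + t b.  Unless t is one of the at most n(n-1)/2
   values (a_j - a_i) / (b_i - b_j), these level sets are the common level sets
   of a and b, so X = diag a and X = diag b qualify.  As S has no repetitions,
   at most n(n-1)/2 of its elements are bad. *)

Lemma uniq_size_le_count_add (T : eqType) (P : pred T) (s L : seq T) :
  uniq s -> (forall t, t \notin L -> P t) -> (size s <= count P s + size L)%N.
Proof.
move=> uniq_s notinL_P; rewrite -(count_predC P s) leq_add2l.
apply: (@leq_trans (count (mem L) s)).
  by apply: sub_count => t /=; apply: contraR => /notinL_P ->.
rewrite -size_filter uniq_leq_size ?filter_uniq // => t.
by rewrite mem_filter => /andP[].
Qed.

Lemma ler_one_sub_ratio (F : numFieldType) (c l s : nat) :
  (0 < s)%N -> (s <= c + l)%N -> 1 - l%:R / s%:R <= c%:R / s%:R :> F.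
Proof.
move=> s_gt0 le_s_cl; rewrite lerBlDr -mulrDl -natrD.
by rewrite ler_pdivlMr ?ltr0n // mul1r ler_nat.
Qed.

Lemma size_filter_lt_ord n (i : 'I_n) :
  size [seq j <- enum 'I_n | (val j < i)%N] = i.
Proof.
rewrite -(size_map val) -(filter_map val (gtn i)) val_enum_ord.
by rewrite (filter_iota_ltn 0 (ltnW (ltn_ord i))) size_iota.
Qed.

Lemma mul_subn1_bin2 n : (n * (n - 1) = 2 * 'C(n, 2))%N.
Proof. by rewrite subn1 -mul_bin_diag bin1. Qed.

Section CollisionParameters.
Variables (K : fieldType) (n : nat) (a b : 'I_n -> K).

(* Pairs with [b i = b j] contribute the junk value [x / 0 = 0]; this only
   enlarges the list. *)
Definition collision_params : seq K :=
  [seq (a j - a i) / (b i - b j) | i <- enum 'I_n,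
                                   j <- [seq j <- enum 'I_n | (val j < i)%N]].

Lemma size_collision_params : size collision_params = 'C(n, 2).
Proof.
rewrite size_allpairs_dep; under eq_map => i do rewrite size_filter_lt_ord.
by rewrite val_enum_ord sumnE -bin2_sum /index_iota subn0.
Qed.

Lemma collision_paramsP t i j :
  t \notin collision_params -> a i + t * b i = a j + t * b j ->
  a i = a j /\ b i = b j.
Proof.
move=> t_notin; wlog lt_ji : i j / (j < i)%N => [hyp|].
  case: (ltngtP i j) => [lt_ij|lt_ji|/val_inj-> //]; last exact: hyp.
  by move/esym/(hyp j i lt_ij) => -[].
have [eq_b eq_ab | neq_b eq_ab] := eqVneq (b i) (b j).
  by split=> //; apply: (addIr (t * b i)); rewrite {2}eq_b.
case/negP: t_notin; have -> : t = (a j - a i) / (b i - b j).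
  apply: (canRL (mulfK _)); first by rewrite subr_eq0.
  by apply: (addrI (a i)); rewrite mulrBr addrA eq_ab addrK addrC subrK.
apply: allpairs_f_dep; first by rewrite mem_enum.
by rewrite mem_filter mem_enum lt_ji.
Qed.

End CollisionParameters.

Section DiagonalConjugation.
Variables (K : fieldType) (n : nat).
Implicit Types (A B C E X P Q T : 'M[K]_n) (t : K).

Lemma invmxM P Q :
  P \in unitmx -> Q \in unitmx -> invmx (P *m Q) = invmx Q *m invmx P.
Proof.
move=> uP uQ; have uPQ : P *m Q \in unitmx by rewrite unitmx_mul uP.
have inv_left : invmx Q *m invmx P *m (P *m Q) = 1%:M.
  by rewrite !mulmxA mulmxKV // mulVmx.
by rewrite -[RHS]mulmx1 -(mulmxV uPQ) mulmxA inv_left mul1mx.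
Qed.

Lemma invmx_conjM P Q X : P \in unitmx -> Q \in unitmx ->
  invmx (P *m Q) *m X *m (P *m Q) = invmx Q *m (invmx P *m X *m P) *m Q.
Proof. by move=> uP uQ; rewrite invmxM // !mulmxA. Qed.

Lemma is_diag_mxD_scale A B t :
  is_diag_mx A -> is_diag_mx B -> is_diag_mx (A + t *: B).
Proof.
move=> /is_diag_mxP dA /is_diag_mxP dB; apply/is_diag_mxP => i j ij.
by rewrite !mxE dA // dB // mulr0 addr0.
Qed.

Lemma intertwine_diag_eq C E Q i j :
  is_diag_mx C -> is_diag_mx E -> C *m Q = Q *m E -> Q i j != 0 ->
  C i i = E j j.
Proof.
move=> /is_diag_mxP dC /is_diag_mxP dE CQ nzQ.
have := congr1 (fun Y : 'M[K]_n => Y i j) CQ; rewrite !mxE.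
rewrite (bigD1 i) //= big1 ?addr0; last first.
  by move=> k; rewrite eq_sym => /dC ->; rewrite mul0r.
rewrite (bigD1 j) //= big1 ?addr0; last by move=> k /dE ->; rewrite mulr0.
by rewrite mulrC => /(mulfI nzQ).
Qed.

(* The columns of Q are eigenvectors of C, and X acts on each of them by the
   scalar X k k for any row k where that column does not vanish. *)
Lemma is_diag_conj_coarser C X Q :
  Q \in unitmx -> is_diag_mx C -> is_diag_mx X ->
  (forall i j, C i i = C j j -> X i i = X j j) ->
  is_diag_mx (invmx Q *m C *m Q) -> is_diag_mx (invmx Q *m X *m Q).
Proof.
move=> uQ dC /is_diag_mxP dX coarse dE.
have CQ : C *m Q = Q *m (invmx Q *m C *m Q) by rewrite !mulmxA mulmxV ?mul1mx.
pose d := \row_j (if [pick k | Q k j != 0] is Some k then X k k else 0).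
suff XQ : X *m Q = Q *m diag_mx d by rewrite -mulmxA XQ mulKmx ?diag_mx_is_diag.
apply/matrixP => i j; rewrite mul_mx_diag !mxE (bigD1 i) //= big1 ?addr0.
  have [->|nzQ] := eqVneq (Q i j) 0; first by rewrite mulr0 mul0r.
  case: pickP => [k /= nzQk|/(_ i)]; last by rewrite nzQ.
  rewrite mulrC; congr (_ * _); apply: coarse.
  by rewrite (intertwine_diag_eq dC dE CQ nzQ) (intertwine_diag_eq dC dE CQ nzQk).
by move=> k; rewrite eq_sym => /dX ->; rewrite mul0r.
Qed.

Lemma good_param_diag A B t :
  is_diag_mx A -> is_diag_mx B ->
  (forall i j, A i i + t * B i i = A j j + t * B j j ->
     A i i = A j j /\ B i i = B j j) ->
  good_param A B t.
Proof.
move=> dA dB separates T uT dT; have dC := is_diag_mxD_scale t dA dB.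
by split; apply: (is_diag_conj_coarser uT dC) => // i j;
  rewrite !mxE => /separates[].
Qed.

Lemma good_param_conj P M N t : P \in unitmx ->
  good_param (invmx P *m M *m P) (invmx P *m N *m P) t -> good_param M N t.
Proof.
move=> uP good T uT dT; set Q := invmx P *m T.
have uQ : Q \in unitmx by rewrite unitmx_mul unitmx_inv uP.
have conjE X : invmx T *m X *m T = invmx Q *m (invmx P *m X *m P) *m Q.
  by rewrite -invmx_conjM // mulKVmx.
have linE : invmx P *m M *m P + t *: (invmx P *m N *m P) =
            invmx P *m (M + t *: N) *m P.
  by rewrite mulmxDr mulmxDl scalemxAl scalemxAr.
by rewrite !conjE; apply: good => //; rewrite linE -conjE.
Qed.

End DiagonalConjugation.

Theorem proposition2 (K : fieldType) (n : nat) (M N : 'M[K]_n) (S : seq K) :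
  simult_diagonalizable M N -> uniq S -> (0 < size S)%N ->
  1 - (n * (n - 1))%:R / (2 * size S)%:R <= prob_good M N S.
Proof.
move=> [P [uP [dA dB]]] uniq_S S_gt0.
set A := invmx P *m M *m P in dA; set B := invmx P *m N *m P in dB.
pose L := collision_params (fun i => A i i) (fun i => B i i).
have good_notin t : t \notin L -> `[< good_param M N t >].
  move=> t_notin; apply/asboolP/(good_param_conj uP)/good_param_diag => // i j.
  exact: collision_paramsP t_notin.
have := uniq_size_le_count_add uniq_S good_notin.
rewrite size_collision_params /prob_good mul_subn1_bin2 !natrM -mulf_div.
by rewrite divff ?mul1r ?pnatr_eq0 //; apply: ler_one_sub_ratio.
Qed.
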